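(* Let $|q|<1$, let $x\neq 0$ and $y$ be complex numbers, and let $n,m\ge 0$ be integers. Then $$\sum_{k=0}^n\sum_{l=0}^m {n\brack k}{m\brack l}(y;q)_k(y/x;q)_l\,x^l\,h_{n+m-k-l}(x,y|q)=\sum_{k=0}^n\sum_{l=0}^m {n\brack k}{m\brack l}(y;q)_k(y/x;q)_l\,(xq^k)^l\,h_{n-k}(x,y|q)\,h_{m-l}(x,y|q).$$
   Context: Throughout $|q|<1$. $(a;q)_n=\prod_{j=0}^{n-1}(1-aq^j)$ and ${n\brack k}=\frac{(q;q)_n}{(q;q)_k(q;q)_{n-k}}$. $P_n(x,y)=(x-y)(x-qy)\cdots(x-q^{n-1}y)$ with $P_0=1$, and $h_n(x,y|q)=\sum_{k=0}^n{n\brack k}P_k(x,y)$. (Note $(y/x;q)_l x^l$ is a polynomial in $x,y$.) *)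

From HB Require Import structures.
From mathcomp Require Import all_boot all_order all_algebra.
From mathcomp Require Import complex.
From mathcomp Require Import reals.
Set Implicit Arguments. Unset Strict Implicit. Unset Printing Implicit Defensive.
Import Order.TTheory GRing.Theory Num.Theory.
Local Open Scope ring_scope.

(* Complex numbers are modelled as R[i] (complex R) over an arbitrary realType R. *)
Section QDefs.
Variable C : fieldType.

Definition qpoch (a q : C) (n : nat) : C := \prod_(j < n) (1 - a * q ^+ j).

Definition qbinom (q : C) (n k : nat) : C :=
  qpoch q q n / (qpoch q q k * qpoch q q (n - k)).

Definition Pq (q x y : C) (n : nat) : C := \prod_(j < n) (x - q ^+ j * y).

Definition hq (q x y : C) (n : nat) : C :=
  \sum_(k < n.+1) qbinom q n k * Pq q x y k.
End QDefs.

From mathcomp Require Import all_boot all_order all_algebra.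
From mathcomp Require Import complex reals.
From mathcomp Require Import ring zify.
Set Implicit Arguments. Unset Strict Implicit. Unset Printing Implicit Defensive.
Import Order.TTheory GRing.Theory Num.Theory.
Local Open Scope ring_scope.

(* By the q-binomial theorem, sum_i [a i] z^(a-i) P_i(x,w) is symmetric in z and x.
   Together with q-Vandermonde and P_(j+i)(x,y) = P_j(x,y) P_i(x,q^j y) this gives
     h_(a+b)(x,y) = sum_j [b j] P_j(x,y) sum_i [a i] x^(a-i) q^(ij) (y;q)_i.
   Expanding h_(n+m-k-l) on the left this way yields a fourfold sum weighted by
   [n k][n-k i][m l][m-l j], a weight invariant under (k,i,l,j) -> (i,k,j,l);
   after that swap the sums over i and j are h_(n-k) and h_(m-l) (the z = 1 case of
   the symmetry), which is the right side with P_l(x,y) = (y/x;q)_l x^l. *)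

Lemma qpochS (C : fieldType) (a q : C) n :
  qpoch a q n.+1 = qpoch a q n * (1 - a * q ^+ n).
Proof. by rewrite /qpoch big_ord_recr. Qed.

Lemma qpoch_qq_neq0 (C : numFieldType) (q : C) n : `|q| < 1 -> qpoch q q n != 0.
Proof.
move=> q_lt1; apply/prodf_neq0 => j _; rewrite subr_eq0 -exprS.
apply/eqP => qX1; have := q_lt1.
by rewrite -(expr_lt1 (ltn0Sn j)) // -normrX -qX1 normr1 ltxx.
Qed.

Lemma Pq_scale (C : fieldType) (q c y : C) n : Pq q c (c * y) n = c ^+ n * qpoch y q n.
Proof.
have -> : c ^+ n = \prod_(j < n) c by rewrite prodr_const card_ord.
rewrite /Pq /qpoch -big_split /=.
by apply: eq_bigr => j _; ring.
Qed.

Lemma Pq_qpoch (C : fieldType) (q x y : C) n :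
  x != 0 -> Pq q x y n = qpoch (y / x) q n * x ^+ n.
Proof. by move=> x_neq0; rewrite mulrC -Pq_scale mulrC divfK. Qed.

Lemma Pq_addn (C : fieldType) (q x y : C) i j :
  Pq q x y (j + i) = Pq q x y j * Pq q x (q ^+ j * y) i.
Proof.
rewrite /Pq big_split_ord /=; congr (_ * _); apply: eq_bigr => t _.
by rewrite exprD mulrA (mulrC (q ^+ j)).
Qed.

Section GaussianBinomial.
Variables (C : fieldType) (q : C).
Hypothesis qfact_neq0 : forall n, qpoch q q n != 0.

Lemma qfactS n : qpoch q q n.+1 = qpoch q q n * (1 - q ^+ n.+1).
Proof. by rewrite qpochS -exprS. Qed.

Lemma qfact_factor_neq0 n : 1 - q ^+ n.+1 != 0.
Proof. by have := qfact_neq0 n.+1; rewrite qfactS mulf_eq0 negb_or => /andP[]. Qed.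

(* [qbinom q n k] is not 0 for [k > n], but [qbin n k] is, so a sum weighted by
   [qbin n] may run over any range containing [0..n]. *)
Definition qbin n k : C := if (k <= n)%N then qbinom q n k else 0.

Lemma qbin_qbinom n k : (k <= n)%N -> qbin n k = qbinom q n k.
Proof. by rewrite /qbin => ->. Qed.

Lemma qbin_gt n k : (n < k)%N -> qbin n k = 0.
Proof. by move=> lt_nk; rewrite /qbin leqNgt lt_nk. Qed.

Lemma qbin0 n : qbin n 0 = 1.
Proof. by rewrite /qbin /qbinom subn0 {2}/qpoch big_ord0 mul1r divff. Qed.

Lemma qbinn n : qbin n n = 1.
Proof. by rewrite /qbin /qbinom leqnn subnn {3}/qpoch big_ord0 mulr1 divff. Qed.

Lemma qbin_sub n k : (k <= n)%N -> qbin n (n - k) = qbin n k.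
Proof.
by move=> le_kn; rewrite /qbin /qbinom leq_subr le_kn subKn // [_ * qpoch _ _ k]mulrC.
Qed.

Lemma qbinS n k : qbin n.+1 k.+1 = qbin n k.+1 + q ^+ (n - k) * qbin n k.
Proof.
case: (ltngtP k n) => [lt_kn|lt_nk|->]; last 2 first.
- by rewrite !qbin_gt ?mulr0 ?addr0 // ltnW.
- by rewrite !qbinn qbin_gt // subnn mulr1 add0r.
rewrite !qbin_qbinom; [|lia..].
have [d ->] : exists d, n = (k + d).+1 by exists (n - k).-1; lia.
rewrite /qbinom.
have -> : ((k + d).+2 - k.+1 = d.+1)%N by lia.
have -> : ((k + d).+1 - k.+1 = d)%N by lia.
have -> : ((k + d).+1 - k = d.+1)%N by lia.
rewrite !qfactS.
have -> : q ^+ (k + d).+2 = q ^+ k.+1 * q ^+ d.+1 by rewrite -exprD; congr (_ ^+ _); lia.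
have := qfact_factor_neq0 k; have := qfact_factor_neq0 d.
have := qfact_neq0 k; have := qfact_neq0 d; have := qfact_neq0 (k + d).+1.
by move=> *; field; apply/and4P.
Qed.

Lemma qbin_trinomialC n k i : qbin n k * qbin (n - k) i = qbin n i * qbin (n - i) k.
Proof.
have qbin_trinomial0 a b : (n < a + b)%N -> qbin n a * qbin (n - a) b = 0.
  have [le_an lt_nab | /qbin_gt -> _] := leqP a n; last by rewrite mul0r.
  by rewrite (@qbin_gt (n - a)) ?mulr0 //; lia.
have [le_kin | lt_nki] := leqP (k + i) n; last first.
  by rewrite !qbin_trinomial0 // addnC.
rewrite !qbin_qbinom; [|lia..]; rewrite /qbinom.
have -> : (n - k - i = n - i - k)%N by lia.
have := qfact_neq0 k; have := qfact_neq0 i; have := qfact_neq0 (n - k);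
have := qfact_neq0 (n - i); have := qfact_neq0 (n - i - k).
by move=> *; field; apply/and5P.
Qed.

Lemma sum_qbin_widen (F : nat -> C) [a N : nat] : (a <= N)%N ->
  \sum_(i < a.+1) qbin a i * F i = \sum_(i < N.+1) qbin a i * F i.
Proof.
move=> le_aN; rewrite (big_ord_widen N.+1 (fun i => qbin a i * F i)) // big_mkcond.
by apply: eq_bigr => i _; case: ltnP => // /qbin_gt ->; rewrite mul0r.
Qed.

Lemma sum_qbin_rev N (F : nat -> C) :
  \sum_(i < N.+1) qbin N i * F i = \sum_(i < N.+1) qbin N i * F (N - i)%N.
Proof.
rewrite (reindex_inj rev_ord_inj); apply: eq_bigr => i _.
by rewrite /= subSS qbin_sub ?subKn ?leq_ord.
Qed.

Lemma sum_qbin_trinomialC N (F : nat -> nat -> C) :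
  \sum_(k < N.+1) \sum_(i < N.+1) qbin N k * qbin (N - k) i * F k i =
  \sum_(k < N.+1) \sum_(i < N.+1) qbin N k * qbin (N - k) i * F i k.
Proof.
rewrite exchange_big; apply: eq_bigr => i _; apply: eq_bigr => k _.
by rewrite qbin_trinomialC.
Qed.

Lemma sum_qbinS N (G : nat -> C) :
  \sum_(r < N.+2) qbin N.+1 r * G r =
  \sum_(r < N.+1) qbin N r * G r + \sum_(r < N.+1) qbin N r * (q ^+ (N - r) * G r.+1).
Proof.
rewrite big_ord_recl qbin0.
under eq_bigr => i _ do rewrite /bump /= qbinS mulrDl.
rewrite big_split /= addrA; congr (_ + _); last first.
  by apply: eq_bigr => i _; rewrite mulrA [qbin _ _ * _]mulrC.
rewrite [RHS]big_ord_recl qbin0 [in LHS]big_ord_recr /= qbin_gt // mul0r addr0.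
by congr (_ + _); apply: eq_bigr => i _; rewrite /bump /= add1n.
Qed.

Lemma qVandermonde a b (F : nat -> C) :
  \sum_(r < (a + b).+1) qbin (a + b) r * F r =
  \sum_(i < a.+1) \sum_(j < b.+1) qbin a i * qbin b j * q ^+ ((a - i) * j) * F (i + j)%N.
Proof.
elim: b F => [|b IHb] F.
  rewrite addn0; apply: eq_bigr => i _.
  by rewrite big_ord1 qbin0 muln0 expr0 !mulr1 addn0.
rewrite addnS sum_qbinS IHb (IHb (fun r => q ^+ (a + b - r) * F r.+1)) -big_split /=.
apply: eq_bigr => i _.
pose G j := qbin a i * q ^+ ((a - i) * j) * F (i + j)%N.
rewrite (eq_bigr (fun j : 'I_b.+2 => qbin b.+1 j * G j)) => [|j _]; last first.
  by rewrite /G; ring.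
rewrite sum_qbinS -!big_split /=; apply: eq_bigr => j _; rewrite /G.
have -> : q ^+ ((a - i) * j.+1) = q ^+ ((a - i) * j) * q ^+ (a - i).
  by rewrite mulnS exprD mulrC.
have -> : q ^+ (a + b - (i + j)) = q ^+ (a - i) * q ^+ (b - j).
  by rewrite -exprD; congr (_ ^+ _); have := ltn_ord i; have := ltn_ord j; lia.
by rewrite addnS; ring.
Qed.

Lemma Pq_qbinomial N x w :
  Pq q x w N = \sum_(r < N.+1) qbin N r * ((-1) ^+ r * q ^+ 'C(r, 2) * w ^+ r * x ^+ (N - r)).
Proof.
elim: N => [|N IHN]; first by rewrite /Pq big_ord0 big_ord1 qbin0; ring.
rewrite (sum_qbinS _ (fun r => (-1) ^+ r * q ^+ 'C(r, 2) * w ^+ r * x ^+ (N.+1 - r))).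
rewrite -big_split /= /Pq big_ord_recr /= -/(Pq q x w N) IHN big_distrl /=.
apply: eq_bigr => r _.
have -> : q ^+ N = q ^+ (N - r) * q ^+ r by rewrite -exprD subnK ?leq_ord.
by rewrite binS bin1 subSS subSn ?leq_ord // !exprS exprD; ring.
Qed.

Definition rogers_szego N (z x : C) : C :=
  \sum_(u < N.+1) qbin N u * (z ^+ u * x ^+ (N - u)).

Lemma rogers_szegoC N z x : rogers_szego N z x = rogers_szego N x z.
Proof.
rewrite /rogers_szego (sum_qbin_rev N (fun u => z ^+ u * x ^+ (N - u))).
apply: eq_bigr => u _.
by rewrite subKn ?leq_ord // [z ^+ _ * _]mulrC.
Qed.

Definition hqz (z x w : C) a : C :=
  \sum_(i < a.+1) qbin a i * (z ^+ (a - i) * Pq q x w i).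

Lemma hqz_rogers_szego z x w a : hqz z x w a =
  \sum_(r < a.+1) qbin a r * ((-1) ^+ r * q ^+ 'C(r, 2) * w ^+ r * rogers_szego (a - r) z x).
Proof.
pose c r := (-1) ^+ r * q ^+ 'C(r, 2) * w ^+ r.
transitivity (\sum_(i < a.+1) \sum_(r < a.+1)
    qbin a i * qbin (a - i) r * (z ^+ i * (c r * x ^+ (a - i - r)))).
  rewrite /hqz (sum_qbin_rev a (fun i => z ^+ (a - i) * Pq q x w i)).
  apply: eq_bigr => i _.
  rewrite subKn ?leq_ord // Pq_qbinomial.
  rewrite (sum_qbin_widen (fun r => c r * x ^+ (a - i - r)) (leq_subr i a)) !big_distrr /=.
  by apply: eq_bigr => r _; rewrite /c; ring.
rewrite (sum_qbin_trinomialC a (fun i r => z ^+ i * (c r * x ^+ (a - i - r)))).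
apply: eq_bigr => i _; rewrite /rogers_szego.
rewrite (sum_qbin_widen (fun r => z ^+ r * x ^+ (a - i - r)) (leq_subr i a)) !big_distrr /=.
by apply: eq_bigr => r _; rewrite subnAC /c; ring.
Qed.

Lemma hqzC z x w a : hqz z x w a = hqz x z w a.
Proof. by rewrite !hqz_rogers_szego; apply: eq_bigr => r _; rewrite rogers_szegoC. Qed.

Lemma hq_qbin x y N : hq q x y N = \sum_(k < N.+1) qbin N k * Pq q x y k.
Proof. by apply: eq_bigr => k _; rewrite qbin_qbinom ?leq_ord. Qed.

Lemma hq_qpoch x y N :
  hq q x y N = \sum_(i < N.+1) qbin N i * (x ^+ (N - i) * qpoch y q i).
Proof.
transitivity (hqz 1 x y N).
  by rewrite hq_qbin; apply: eq_bigr => k _; rewrite expr1n mul1r.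
rewrite hqzC; apply: eq_bigr => i _.
by rewrite -[in Pq _ _ _ _](mul1r y) Pq_scale expr1n mul1r.
Qed.

Lemma hq_addn a b x y : hq q x y (a + b) = \sum_(j < b.+1) qbin b j *
  (Pq q x y j * \sum_(i < a.+1) qbin a i * (x ^+ (a - i) * (q ^+ (i * j) * qpoch y q i))).
Proof.
rewrite hq_qbin (qVandermonde a b (Pq q x y)) exchange_big /=; apply: eq_bigr => j _.
transitivity (qbin b j * (Pq q x y j * hqz (q ^+ j) x (q ^+ j * y) a)).
  rewrite /hqz !big_distrr /=; apply: eq_bigr => i _.
  by rewrite addnC Pq_addn -exprM mulnC; ring.
rewrite hqzC /hqz; congr (_ * (_ * _)); apply: eq_bigr => i _.
by rewrite Pq_scale -exprM mulnC.
Qed.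

Lemma sum_qbin_trinomialC2 n m (F : nat -> nat -> nat -> nat -> C) :
  \sum_(k < n.+1) \sum_(l < m.+1) \sum_(i < n.+1) \sum_(j < m.+1)
    qbin n k * qbin (n - k) i * (qbin m l * qbin (m - l) j) * F k i l j =
  \sum_(k < n.+1) \sum_(l < m.+1) \sum_(i < n.+1) \sum_(j < m.+1)
    qbin n k * qbin (n - k) i * (qbin m l * qbin (m - l) j) * F i k j l.
Proof.
have nest (G : nat -> nat -> nat -> nat -> C) :
    \sum_(k < n.+1) \sum_(l < m.+1) \sum_(i < n.+1) \sum_(j < m.+1)
      qbin n k * qbin (n - k) i * (qbin m l * qbin (m - l) j) * G k i l j =
    \sum_(k < n.+1) \sum_(i < n.+1) qbin n k * qbin (n - k) i *
      \sum_(l < m.+1) \sum_(j < m.+1) qbin m l * qbin (m - l) j * G k i l j.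
  apply: eq_bigr => k _; rewrite exchange_big; apply: eq_bigr => i _.
  rewrite big_distrr; apply: eq_bigr => l _; rewrite big_distrr /=.
  by apply: eq_bigr => j _; rewrite !mulrA.
rewrite nest (nest (fun k i l j => F i k j l)).
rewrite (sum_qbin_trinomialC n (fun k i =>
  \sum_(l < m.+1) \sum_(j < m.+1) qbin m l * qbin (m - l) j * F k i l j)).
apply: eq_bigr => k _; apply: eq_bigr => i _.
by rewrite (sum_qbin_trinomialC m (F i k)).
Qed.

Lemma hq_convolution n m x y :
  \sum_(k < n.+1) \sum_(l < m.+1)
     qbin n k * qbin m l * qpoch y q k * Pq q x y l * hq q x y (n + m - k - l)
  = \sum_(k < n.+1) \sum_(l < m.+1)
     qbin n k * qbin m l * qpoch y q k * Pq q x y l * q ^+ (k * l)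
       * hq q x y (n - k) * hq q x y (m - l).
Proof.
pose F k i l j := qpoch y q k * Pq q x y l * Pq q x y j *
  x ^+ (n - k - i) * q ^+ (i * j) * qpoch y q i.
transitivity (\sum_(k < n.+1) \sum_(l < m.+1) \sum_(i < n.+1) \sum_(j < m.+1)
    qbin n k * qbin (n - k) i * (qbin m l * qbin (m - l) j) * F k i l j).
  apply: eq_bigr => k _; apply: eq_bigr => l _.
  have -> : (n + m - k - l = (n - k) + (m - l))%N.
    by have := leq_ord k; have := leq_ord l; lia.
  rewrite hq_addn.
  under eq_bigr => j _ do rewrite (sum_qbin_widen
    (fun i => x ^+ (n - k - i) * (q ^+ (i * j) * qpoch y q i)) (leq_subr k n)).
  rewrite (sum_qbin_widen (fun j => Pq q x y j * \sum_(i < n.+1) qbin (n - k) i *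
    (x ^+ (n - k - i) * (q ^+ (i * j) * qpoch y q i))) (leq_subr l m)).
  rewrite exchange_big big_distrr /=; apply: eq_bigr => j _.
  rewrite !big_distrr /=; apply: eq_bigr => i _.
  by rewrite /F; ring.
rewrite sum_qbin_trinomialC2; apply: eq_bigr => k _; apply: eq_bigr => l _.
rewrite hq_qpoch hq_qbin.
rewrite (sum_qbin_widen (fun i => x ^+ (n - k - i) * qpoch y q i) (leq_subr k n)).
rewrite (sum_qbin_widen (Pq q x y) (leq_subr l m)).
rewrite [X in _ = X * _]big_distrr big_distrl /=; apply: eq_bigr => i _.
rewrite big_distrr /=; apply: eq_bigr => j _.
by rewrite /F subnAC; ring.
Qed.

End GaussianBinomial.

Local Open Scope complex_scope.

Theorem corollary3p2 (R : realType) (q x y : R[i]) (n m : nat)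
  (hq1 : `|q| < 1) (hx : x != 0) :
  \sum_(k < n.+1) \sum_(l < m.+1)
     qbinom q n k * qbinom q m l * qpoch y q k * qpoch (y / x) q l * x ^+ l
       * hq q x y (n + m - k - l)
  = \sum_(k < n.+1) \sum_(l < m.+1)
     qbinom q n k * qbinom q m l * qpoch y q k * qpoch (y / x) q l
       * (x * q ^+ k) ^+ l * hq q x y (n - k) * hq q x y (m - l).
Proof.
have qfact_neq0 N : qpoch q q N != 0 by exact: qpoch_qq_neq0.
transitivity (\sum_(k < n.+1) \sum_(l < m.+1)
  qbin q n k * qbin q m l * qpoch y q k * Pq q x y l * hq q x y (n + m - k - l)).
  apply: eq_bigr => k _; apply: eq_bigr => l _.
  by rewrite (Pq_qpoch _ _ _ hx) !qbin_qbinom ?leq_ord // !mulrA.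
rewrite (hq_convolution qfact_neq0); apply: eq_bigr => k _; apply: eq_bigr => l _.
by rewrite (Pq_qpoch _ _ _ hx) !qbin_qbinom ?leq_ord // exprMn -exprM; ring.
Qed.
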